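(* Let $G$ and $H$ be finite simple connected graphs with $|V(G)|>1$, and let $L$ be a non-empty subset of $V(G)$. If $\mathscr{C}(G\circ_L H)$ is an accessible set system, then $\mathscr{C}(H)$ is an accessible set system.
   Context: For a graph $\Gamma$ and $A\subseteq V(\Gamma)$, $\omega(\Gamma\setminus A)$ is the number of connected components of the induced subgraph on $V(\Gamma)\setminus A$. A subset $T\subseteq V(\Gamma)$ is a cutset if $T=\emptyset$ or, for every $v\in T$, $\omega(\Gamma\setminus (T\setminus\{v\}))<\omega(\Gamma\setminus T)$; $\mathscr{C}(\Gamma)$ is the set of cutsets. $\mathscr{C}(\Gamma)$ is an accessible set system if for every non-empty $T\in\mathscr{C}(\Gamma)$ there is $t\in T$ with $T\setminus\{t\}\in\mathscr{C}(\Gamma)$. For a non-empty $L\subseteq V(G)$, $G\circ_L H$ is the graph obtained from $G$ by taking, for each $v\in L$, a disjoint copy $H_v$ of $H$ and joining $v$ to every vertex of $H_v$. *)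

From mathcomp Require Import all_boot.
Set Implicit Arguments. Unset Strict Implicit. Unset Printing Implicit Defensive.

Definition simple_graph (V : finType) (e : rel V) : Prop :=
  symmetric e /\ irreflexive e.

Definition graph_connected (V : finType) (e : rel V) : Prop :=
  forall x y : V, connect e x y.

Section Cutsets.
Variables (V : finType) (e : rel V).

Definition del_rel (A : {set V}) : rel V :=
  fun x y => [&& x \notin A, y \notin A & e x y].

Definition comp_of (A : {set V}) (x : V) : {set V} :=
  [set y | (y \notin A) && connect (del_rel A) x y].

Definition omega (A : {set V}) : nat :=
  #|[set comp_of A x | x in ~: A]|.

Definition cutset (T : {set V}) : Prop :=
  T = set0 \/ forall v, v \in T -> omega (T :\ v) < omega T.

Definition accessible_cutsets : Prop :=
  forall T : {set V}, cutset T -> T != set0 ->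
    exists2 t, t \in T & cutset (T :\ t).
End Cutsets.

Section Corona.
Variables (VG VH : finType) (eG : rel VG) (eH : rel VH) (L : {set VG}).

(* the copies H_v, v in L: pairs (v, h) with v in L *)
Definition cop_vert := {x : VG * VH | x.1 \in L}.

Definition corona_vert : finType := (VG + cop_vert)%type.

Definition corona_rel : rel corona_vert :=
  fun x y =>
    match x, y with
    | inl u, inl v => eG u v
    | inl u, inr p => u == (val p).1
    | inr p, inl u => (val p).1 == u
    | inr p, inr q => ((val p).1 == (val q).1) && eH (val p).2 (val q).2
    end.
End Corona.

Arguments corona_rel {VG VH} eG eH L.

From mathcomp Require Import all_boot.
Set Implicit Arguments. Unset Strict Implicit. Unset Printing Implicit Defensive.

(* Write Γ = G o_L H, fix v in L and let H_v be its copy of H; for a set S of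
   vertices of H let S' be v together with the copy S_v of S.  Deleting S'
   from Γ leaves H_v - S_v, a copy of H - S, beside the components of Γ - v
   outside H_v, whose number K does not depend on S and is positive because
   G has a vertex other than v.  So omega(Γ - S') = omega(H - S) + K.
   Deleting only vertices of H_v leaves a connected graph, as every remaining
   vertex is joined to G.  Hence a non-empty cutset T of H lifts to the
   cutset T'; accessibility gives a cutset T' - x, where x = v is impossible
   since T_v is not a cutset, so x = t_v and T - t is a cutset of H. *)

Lemma homo_connect (T U : finType) (f : T -> U) (e : rel T) (e' : rel U) :
  {homo f : x y / e x y >-> e' x y} ->
  {homo f : x y / connect e x y >-> connect e' x y}.
Proof.
move=> fe x _ /connectP[p ep ->]; apply/connectP.
by exists (map f p); [exact: homo_path fe ep | rewrite last_map].
Qed.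

Section NComp.
Variables (T : finType) (e : rel T).

Lemma closedI (pA pB : predType T) (a : pA) (b : pB) :
  closed e a -> closed e b -> closed e [predI a & b].
Proof. by move=> cla clb x y exy; rewrite !inE (cla _ _ exy) (clb _ _ exy). Qed.

Lemma n_compID (pT : predType T) (a : pT) (b : {pred T}) :
  n_comp e a = n_comp e [predI a & b] + n_comp e [predI a & [predC b]].
Proof.
rewrite /n_comp_mem -(cardID b); congr (_ + _); apply: eq_card => x;
  by rewrite !inE; case: (x \in b); rewrite /= ?andbT ?andbF.
Qed.

Hypothesis e_sym : connect_sym e.

Lemma n_comp_gt0 (a : {pred T}) x : closed e a -> x \in a -> 0 < n_comp e a.
Proof.
move=> cla ax; apply/card_gt0P; exists (root e x).
by rewrite inE /= roots_root // -(closed_connect cla (connect_root e x)).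
Qed.

Lemma eq_n_comp_on (e' : rel T) (a : {pred T}) :
  connect_sym e' -> closed e a -> (forall x y, x \in a -> e x y = e' x y) ->
  n_comp e a = n_comp e' a.
Proof.
move=> e'_sym cla ee'; rewrite (adjunction_n_comp id e_sym e'_sym cla).
  by apply: eq_n_comp_r.
apply: strict_adjunction => //.
  by apply/subsetP => x _; exact: codom_f id x.
by move=> x y; rewrite negbK; exact: ee'.
Qed.

End NComp.

Section Components.
Variables (V : finType) (e : rel V).
Hypothesis e_sym : symmetric e.

Lemma connect_sym_del_rel (A : {set V}) : connect_sym (del_rel e A).
Proof. by apply: sym_connect_sym => x y; rewrite /del_rel e_sym andbCA. Qed.

Lemma closed_del_relC (A : {set V}) : closed (del_rel e A) (~: A).
Proof.
apply: (intro_closed (connect_sym_del_rel A)) => x y /and3P[_ yA _] _.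
by rewrite inE.
Qed.
#[global] Arguments closed_del_relC A [x y].

Lemma omega_n_comp (A : {set V}) : omega e A = n_comp (del_rel e A) (~: A).
Proof.
set d := del_rel e A; have d_sym := connect_sym_del_rel A.
have comp_root x : comp_of e A (root d x) = comp_of e A x.
  by apply/setP => y; rewrite !inE -(same_connect d_sym (connect_root d x)).
have root_notin x : x \in ~: A -> root d x \in ~: A.
  by rewrite (closed_connect (closed_del_relC A) (connect_root d x)).
rewrite /omega /n_comp_mem -(card_in_imset (f := comp_of e A)).
  apply: eq_card => C; apply/imsetP/imsetP => [[x xA ->]|[r /andP[_ rA] ->]].
    by exists (root d x); rewrite ?comp_root // inE /= roots_root // root_notin.
  by exists r.
move=> r1 r2 /andP[/eqP r1r]; rewrite [_ r1]inE => rA1 /andP[/eqP r2r _].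
move=> /setP /(_ r1); rewrite !inE connect0 rA1 => /esym/(rootP d_sym).
by rewrite r1r r2r.
Qed.

Lemma eq_n_comp_del_rel (P : {pred V}) (A B : {set V}) :
  closed (del_rel e A) P -> closed (del_rel e B) P ->
  (forall x, x \in P -> (x \in A) = (x \in B)) ->
  n_comp (del_rel e A) [predI ~: A & P] = n_comp (del_rel e B) [predI ~: B & P].
Proof.
move=> clA clB AB.
have APB x : x \in [predI ~: A & P] = (x \in [predI ~: B & P]).
  by rewrite !inE; case Px: (x \in P); rewrite ?andbF ?AB.
rewrite -(eq_n_comp_r APB).
apply: (eq_n_comp_on (connect_sym_del_rel A) (connect_sym_del_rel B)).
  exact: closedI (closed_del_relC A) clA.
move=> x y /andP[]; rewrite inE => xA Px; have xB : x \notin B by rewrite -AB.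
case Py: (y \in P); first by rewrite /del_rel xA xB AB.
by apply/idP/idP => [/clA|/clB]; rewrite Px Py.
Qed.
End Components.

Section CoronaCopy.
Variables (VG VH : finType) (eG : rel VG) (eH : rel VH) (L : {set VG}) (v : VG).
Hypothesis vL : v \in L.
Hypotheses (eG_sym : symmetric eG) (eH_sym : symmetric eH).
Local Notation CV := (corona_vert VH L).
Local Notation E := (corona_rel eG eH L).
Implicit Types (S : {set VH}) (A : {set CV}).

Lemma corona_rel_sym : symmetric E.
Proof. by move=> [a|p] [b|q] /=; rewrite 1?eG_sym 1?eq_sym 1?eH_sym. Qed.

Definition copy (h : VH) : CV := inr (exist _ (v, h) vL).

Definition in_copy (x : CV) : bool :=
  if x is inr p then (val p).1 == v else false.

Definition corona_lift (S : {set VH}) : {set CV} := inl v |: copy @: S.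

Lemma copy_inj : injective copy.
Proof. by move=> a b []. Qed.

Lemma in_copyP x : reflect (exists h, x = copy h) (in_copy x).
Proof.
apply: (iffP idP) => [|[h ->]]; last by rewrite /= eqxx.
case: x => // [[[w h] wL]] /= /eqP wv; subst w; exists h.
by congr inr; apply: val_inj.
Qed.

Lemma copy_in_copy h : copy h \in in_copy.
Proof. by apply/in_copyP; exists h. Qed.

Lemma imset_copy_sub S : {subset copy @: S <= in_copy}.
Proof. by move=> x /imsetP[h _ ->]; exact: copy_in_copy. Qed.

Lemma notin_copy S x : ~~ in_copy x -> x \notin copy @: S.
Proof. by move=> nx; apply/imsetP => -[h _ xh]; rewrite xh /= eqxx in nx. Qed.

Lemma mem_corona_lift S h : (copy h \in corona_lift S) = (h \in S).
Proof. by rewrite !inE (mem_imset _ _ copy_inj). Qed.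

Lemma corona_lift_neq0 S : corona_lift S != set0.
Proof. by apply/set0Pn; exists (inl v); rewrite !inE eqxx. Qed.

Lemma corona_liftD1_apex S : corona_lift S :\ inl v = copy @: S.
Proof. exact/setU1K/notin_copy. Qed.

Lemma corona_liftD1 S t : corona_lift S :\ copy t = corona_lift (S :\ t).
Proof.
apply/setP => x; rewrite !inE; have [/in_copyP[h ->]|nx] := boolP (in_copy x).
  by rewrite !(mem_imset _ _ copy_inj) (inj_eq copy_inj) !inE.
by rewrite !(negbTE (notin_copy _ nx)) !orbF; case: eqP => // ->.
Qed.

Lemma del_rel_copy S a b :
  del_rel E (corona_lift S) (copy a) (copy b) = del_rel eH S a b.
Proof. by rewrite /del_rel !mem_corona_lift /= eqxx. Qed.

Lemma closed_in_copy A : inl v \in A -> closed (del_rel E A) in_copy.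
Proof.
move=> vA x y /and3P[xA yA exy]; suff: in_copy x = in_copy y by [].
case: x y xA yA exy => [u|[[w h] wL]] [u'|[[w' h'] w'L]] //=.
- move=> uA _ /eqP uw; apply/esym/eqP => wv.
  by rewrite uw wv vA in uA.
- move=> _ uA /eqP wu; apply/eqP => wv.
  by rewrite -wu wv vA in uA.
- by move=> _ _ /andP[/eqP ->].
Qed.


Definition n_comp_outside_copy : nat :=
  n_comp (del_rel E [set inl v]) [predI ~: [set inl v] & [predC in_copy]].

Lemma omega_corona_lift S :
  omega E (corona_lift S) = omega eH S + n_comp_outside_copy.
Proof.
set A := corona_lift S; have vA : inl v \in A by rewrite !inE eqxx.
rewrite (omega_n_comp corona_rel_sym) (omega_n_comp eH_sym).
rewrite (n_compID _ _ in_copy); congr (_ + _).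
- have cl_copy : closed (del_rel E A) [predI ~: A & in_copy].
    exact: closedI (closed_del_relC corona_rel_sym A) (closed_in_copy vA).
  have symA := connect_sym_del_rel corona_rel_sym A.
  have symS := connect_sym_del_rel eH_sym S.
  rewrite (adjunction_n_comp copy symA symS cl_copy).
    apply: eq_n_comp_r => h.
    by rewrite !inE (mem_imset _ _ copy_inj) copy_in_copy andbT.
  apply: (strict_adjunction symS cl_copy copy_inj).
    by apply/subsetP => x /andP[_ /in_copyP[h ->]]; exact: codom_f.
  by move=> a b _; exact: del_rel_copy.
- apply: (eq_n_comp_del_rel corona_rel_sym).
  + exact: predC_closed (closed_in_copy vA).
  + by apply/predC_closed/closed_in_copy; rewrite inE.
  + move=> x; rewrite inE => nx.
    by rewrite !inE (negbTE (notin_copy S nx)) orbF.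
Qed.

Lemma n_comp_outside_copy_gt0 u : u != v -> 0 < n_comp_outside_copy.
Proof.
move=> uv; have vv : inl v \in [set inl v : CV] := set11 _.
apply: (n_comp_gt0 (connect_sym_del_rel corona_rel_sym _) _ (x := inl u)).
  apply: closedI (closed_del_relC corona_rel_sym _) _.
  exact: predC_closed (closed_in_copy vv).
by rewrite !inE andbT (inj_eq (@inl_inj _ _)).
Qed.

Lemma cutset_corona_lift S : cutset E (corona_lift S) -> cutset eH S.
Proof.
case=> [/setP/(_ (inl v))|cutA]; first by rewrite !inE eqxx.
right=> s sS; have := cutA (copy s); rewrite mem_corona_lift corona_liftD1.
by rewrite !omega_corona_lift ltn_add2r; apply.
Qed.

Hypothesis G_connected : graph_connected eG.

Lemma omega_sub_copy A : {subset A <= in_copy} -> omega E A = 1.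
Proof.
move=> Acopy; have symA := connect_sym_del_rel corona_rel_sym A.
have inlA w : inl w \notin A by apply/negP => /Acopy.
rewrite (omega_n_comp corona_rel_sym) -(n_comp_connect symA (inl v)).
apply: eq_n_comp_r => x; apply/idP/idP => [xA|]; last first.
  move=> /(closed_connect (closed_del_relC corona_rel_sym A)) <-.
  by rewrite inE.
have to_apex w : connect (del_rel E A) (inl v) (inl w).
  by apply: homo_connect (G_connected v w) => a b ab; rewrite /del_rel !inlA.
case: x xA => [w _|p]; first exact: to_apex.
rewrite inE => pA; apply: connect_trans (to_apex (val p).1) (connect1 _).
by rewrite /del_rel inlA pA /= eqxx.
Qed.

Lemma cutset_sub_copy A : {subset A <= in_copy} -> cutset E A -> A = set0.
Proof.
move=> Acopy [//|cutA]; apply/eqP/set0Pn => -[x xA].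
by have := cutA x xA; rewrite !omega_sub_copy ?ltnn // => y /setD1P[_ /Acopy].
Qed.

Lemma corona_lift_cutset u S :
  u != v -> cutset eH S -> S != set0 -> cutset E (corona_lift S).
Proof.
move=> uv [-> /eqP//|cutS] /set0Pn[s sS].
right=> x /setU1P[->|/imsetP[t tS ->]].
  rewrite corona_liftD1_apex omega_sub_copy ?omega_corona_lift;
    last exact: imset_copy_sub.
  have omegaS_gt0 : 0 < omega eH S := leq_ltn_trans (leq0n _) (cutS s sS).
  exact: leq_add omegaS_gt0 (n_comp_outside_copy_gt0 uv).
by rewrite corona_liftD1 !omega_corona_lift ltn_add2r; apply: cutS.
Qed.

Lemma accessible_cutsets_corona u :
  u != v -> accessible_cutsets E -> accessible_cutsets eH.
Proof.
move=> uv accE T cutT T0.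
have [x] := accE _ (corona_lift_cutset uv cutT T0) (corona_lift_neq0 T).
case/setU1P=> [->|/imsetP[t tT ->]].
  rewrite corona_liftD1_apex => /(cutset_sub_copy (@imset_copy_sub T))/eqP.
  by rewrite imset_eq0 (negbTE T0).
by rewrite corona_liftD1 => /cutset_corona_lift; exists t.
Qed.
End CoronaCopy.

Theorem theorem3p9 (VG VH : finType) (eG : rel VG) (eH : rel VH)
  (L : {set VG}) :
  simple_graph eG -> graph_connected eG -> 1 < #|VG| ->
  simple_graph eH -> graph_connected eH ->
  L != set0 ->
  accessible_cutsets (corona_rel eG eH L) ->
  accessible_cutsets eH.
Proof.
move=> [eG_sym _] G_conn /card_gt1P[a [b [_ _ ab]]] [eH_sym _] _ /set0Pn[v vL].
have [u uv] : exists u, u != v.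
  by case: (eqVneq a v) => [av|]; [exists b; rewrite -av eq_sym | exists a].
exact: (accessible_cutsets_corona vL eG_sym eH_sym G_conn uv).
Qed.
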